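(* In the setting below, for any integer $t \ge 0$, if $\eta \geq \eta_0$ and an oscillation happens at some iteration $t_k > t$, then $\hat{w}_{t+1} \geq (1+\gamma^2/2)\hat{w}_t$.
   Context: Dimension $d=2$. Data $x_1,\dots,x_n\in\mathbb{R}^2$ with $\|x_i\|\le 1$, linearly separable (some $w$ has $\langle w,x_i\rangle>0$ for all $i$). $F(w) = \frac{1}{n}\sum_{i=1}^n \log(1+\exp(-\langle w, x_i\rangle))$. Maximum margin $\gamma = \max_{\|w\|=1}\min_i \langle w, x_i\rangle$ with maximizer the unit vector $w_*$; $v_*$ is a fixed unit vector orthogonal to $w_*$. Gradient descent: $w_0=0$, $w_{t+1} = w_t - \eta\nabla F(w_t)$ with constant $\eta>0$. $\hat{w}_t = \langle w_t, w_*\rangle$, $\tilde{w}_t = \langle w_t, v_*\rangle$. $\eta_0 = \max(n, \frac{32}{\gamma^2}\log\frac{256}{\gamma^2})$. $\lambda = \frac{1}{\gamma}\log\frac{1}{\exp(1/(8\eta))-1}$. An oscillation happens at iteration $t\ge 0$ if all of: (1) $\hat{w}_t \geq \lambda$; (2) $F(w_t) > 1/(8\eta)$ and $F(w_{t+1}) > 1/(8\eta)$; (3) $\tilde{w}_{t+1}\tilde{w}_t < 0$. *)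

From Stdlib Require Import Reals Lra.
From Coquelicot Require Import Coquelicot.
Open Scope R_scope.

Definition vec := (R * R)%type.
Definition dot (u v : vec) : R := fst u * fst v + snd u * snd v.
Definition vnorm (u : vec) : R := sqrt (dot u u).
Definition vadd (u v : vec) : vec := (fst u + fst v, snd u + snd v).
Definition vscale (a : R) (u : vec) : vec := (a * fst u, a * snd u).

Fixpoint sumR (f : nat -> R) (n : nat) : R :=
  match n with O => 0 | S k => sumR f k + f k end.

Definition F (n : nat) (x : nat -> vec) (w : vec) : R :=
  / INR n * sumR (fun i => ln (1 + exp (- dot w (x i)))) n.

Definition gradF (n : nat) (x : nat -> vec) (w : vec) : vec :=
  (Derive (fun a => F n x (a, snd w)) (fst w),
   Derive (fun b => F n x (fst w, b)) (snd w)).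

Fixpoint gd (n : nat) (x : nat -> vec) (eta : R) (t : nat) : vec :=
  match t with
  | O => (0, 0)
  | S k => let w := gd n x eta k in vadd w (vscale (- eta) (gradF n x w))
  end.

Definition is_max_margin (n : nat) (x : nat -> vec) (gamma : R) (wstar : vec) : Prop :=
  vnorm wstar = 1 /\
  (forall i, (i < n)%nat -> gamma <= dot wstar (x i)) /\
  (exists i, (i < n)%nat /\ dot wstar (x i) = gamma) /\
  (forall w, vnorm w = 1 -> exists i, (i < n)%nat /\ dot w (x i) <= gamma).

Definition eta0 (n : nat) (gamma : R) : R :=
  Rmax (INR n) (32 / gamma ^ 2 * ln (256 / gamma ^ 2)).

Definition lambda (gamma eta : R) : R :=
  / gamma * ln (/ (exp (/ (8 * eta)) - 1)).

Definition oscillation (n : nat) (x : nat -> vec) (eta gamma : R)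
    (wstar vstar : vec) (t : nat) : Prop :=
  dot (gd n x eta t) wstar >= lambda gamma eta /\
  F n x (gd n x eta t) > / (8 * eta) /\
  F n x (gd n x eta (S t)) > / (8 * eta) /\
  dot (gd n x eta (S t)) vstar * dot (gd n x eta t) vstar < 0.

(* Write a_s = <w_s, wstar>, b_s = <w_s, vstar>, and call an iterate slow when
   a_(s+1) < (1 + gamma^2/2) a_s.  From w_0 = 0 the first step gives a_s >= gamma eta / 2 for
   s >= 1.  At a slow iterate the total gradient weight is below gamma a_s / 2 (every point has
   margin >= gamma along wstar).  Hence points of margin >= gamma a_s keep weight <= e^-c with
   c = gamma^2 eta / 4, while points of smaller margin all lie on the same side of wstar, so their
   pairwise inner products are nonnegative and their margins drop by at most eta e^-2c.  The choice
   eta >= eta0 makes the resulting increase of the gradient at most gamma^4 a_s / 4, and the next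
   iterate is slow again.  Finally, if a slow iterate oscillates, |b| is below the step in the vstar
   direction, so below gamma a / 2; then all margins exceed c and F <= e^-c <= 1 / (8 eta). *)

From Stdlib Require Import Reals Lra Lia.
From Coquelicot Require Import Coquelicot.
Open Scope R_scope.

Lemma sumR_ext f g k :
  (forall i, (i < k)%nat -> f i = g i) -> sumR f k = sumR g k.
Proof.
  induction k as [|k IH]; intros H; simpl; [reflexivity|].
  rewrite IH by (intros; apply H; lia). rewrite H by lia. reflexivity.
Qed.

Lemma sumR_le f g k :
  (forall i, (i < k)%nat -> f i <= g i) -> sumR f k <= sumR g k.
Proof.
  induction k as [|k IH]; intros H; simpl; [lra|].
  pose proof (IH (fun i Hi => H i ltac:(lia))). pose proof (H k ltac:(lia)). lra.
Qed.

Lemma sumR_const c k : sumR (fun _ => c) k = INR k * c.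
Proof. induction k as [|k IH]; simpl sumR; [simpl; ring|]. rewrite IH, S_INR. ring. Qed.

Lemma sumR_plus f g k : sumR (fun i => f i + g i) k = sumR f k + sumR g k.
Proof. induction k as [|k IH]; simpl; [ring|]. rewrite IH. ring. Qed.

Lemma sumR_scal c f k : sumR (fun i => c * f i) k = c * sumR f k.
Proof. induction k as [|k IH]; simpl; [ring|]. rewrite IH. ring. Qed.

Lemma Rabs_sumR_le f g k :
  (forall i, (i < k)%nat -> Rabs (f i) <= g i) -> Rabs (sumR f k) <= sumR g k.
Proof.
  induction k as [|k IH]; intros H; simpl; [rewrite Rabs_R0; lra|].
  pose proof (IH (fun i Hi => H i ltac:(lia))). pose proof (H k ltac:(lia)).
  pose proof (Rabs_triang (sumR f k) (f k)). lra.
Qed.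

Lemma exp_le_compat a b : a <= b -> exp a <= exp b.
Proof. intros [H|H]; [left; apply exp_increasing | subst]; lra. Qed.

Lemma Rabs_lt_of_sign_change b d : (b + d) * b < 0 -> Rabs b < Rabs d.
Proof.
  intros H. unfold Rabs. destruct (Rcase_abs b), (Rcase_abs d); nra.
Qed.

Lemma ln_1p_exp_le z : ln (1 + exp z) <= exp z.
Proof.
  pose proof (exp_pos z). rewrite <- (ln_exp (exp z)) at 2.
  apply ln_le; [lra | apply exp_ineq1_le].
Qed.

Lemma dot_comm u v : dot u v = dot v u.
Proof. unfold dot. ring. Qed.

Lemma dot_self_nonneg u : 0 <= dot u u.
Proof. unfold dot. nra. Qed.

Lemma dot_self_le_1 u : vnorm u <= 1 -> dot u u <= 1.
Proof.
  unfold vnorm. intros H. pose proof (dot_self_nonneg u).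
  rewrite <- (sqrt_sqrt (dot u u)) by assumption.
  pose proof (sqrt_pos (dot u u)). nra.
Qed.

Lemma dot_self_unit u : vnorm u = 1 -> dot u u = 1.
Proof.
  unfold vnorm. intros H.
  rewrite <- (sqrt_sqrt (dot u u)) by apply dot_self_nonneg. rewrite H. ring.
Qed.

Lemma Rabs_dot_le_1 u v : dot u u <= 1 -> dot v v <= 1 -> Rabs (dot u v) <= 1.
Proof.
  destruct u as [a b], v as [c d]. unfold dot; simpl. intros Hu Hv.
  assert (Hlagrange : (a * c + b * d) ^ 2 + (a * d - b * c) ^ 2
                      = (a * a + b * b) * (c * c + d * d)) by ring.
  assert ((a * a + b * b) * (c * c + d * d) <= 1 * 1)
    by (apply Rmult_le_compat; nra).
  assert (Hsq : (a * c + b * d) ^ 2 <= 1) by (pose proof (pow2_ge_0 (a * d - b * c)); lra).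
  apply Rabs_le. split; nra.
Qed.

Lemma dot_orthonormal_expand (ws vs w y : vec) :
  dot ws ws = 1 -> dot vs vs = 1 -> dot vs ws = 0 ->
  dot w y = dot w ws * dot y ws + dot w vs * dot y vs.
Proof.
  destruct ws as [p q], vs as [r s], w as [w1 w2], y as [y1 y2].
  unfold dot; simpl. intros H1 H2 H3.
  set (k := s * p - r * q).
  assert (Hr : r = - k * q).
  { transitivity (r * (p * p + q * q) - p * (r * p + s * q)); [rewrite H1, H3|]; unfold k; ring. }
  assert (Hs : s = k * p).
  { transitivity (s * (p * p + q * q) - q * (r * p + s * q)); [rewrite H1, H3|]; unfold k; ring. }
  assert (Hk : k * k = 1).
  { rewrite <- H2. transitivity (k * k * (p * p + q * q)); [rewrite H1; ring|].
    rewrite Hr, Hs. ring. }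
  rewrite Hr, Hs.
  transitivity ((w1 * p + w2 * q) * (y1 * p + y2 * q)
                + k * k * ((w2 * p - w1 * q) * (y2 * p - y1 * q))); [|ring].
  rewrite Hk.
  transitivity ((w1 * y1 + w2 * y2) * (p * p + q * q)); [rewrite H1|]; ring.
Qed.

(* [- d/dz ln (1 + exp (- z))]: the weight of a point of margin [z] in [- gradF]. *)
Definition logistic_weight (z : R) : R := / (1 + exp z).

Lemma is_derive_logistic_loss (c d a : R) :
  is_derive (fun b => ln (1 + exp (- (b * c + d)))) a
    (- (logistic_weight (a * c + d) * c)).
Proof.
  unfold logistic_weight. pose proof (exp_pos (a * c + d)).
  auto_derive.
  - pose proof (exp_pos (- (a * c + d))). lra.
  - rewrite exp_Ropp. field. lra.
Qed.

Lemma logistic_weight_pos z : 0 < logistic_weight z.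
Proof. apply Rinv_0_lt_compat. pose proof (exp_pos z). lra. Qed.

Lemma logistic_weight_le_exp z : logistic_weight z <= exp (- z).
Proof.
  unfold logistic_weight. rewrite exp_Ropp. pose proof (exp_pos z).
  apply Rinv_le_contravar; lra.
Qed.

(* The weight is decreasing and 1-Lipschitz. *)
Lemma logistic_weight_le_shift m m' d :
  0 <= d -> m - d <= m' -> logistic_weight m' <= logistic_weight m + d.
Proof.
  unfold logistic_weight. intros Hd Hm'.
  pose proof (exp_pos m). pose proof (exp_pos m').
  destruct (Rle_or_lt m m') as [Hup | Hdown].
  - pose proof (exp_le_compat _ _ Hup).
    assert (/ (1 + exp m') <= / (1 + exp m)) by (apply Rinv_le_contravar; lra). lra.
  - assert (Hratio : 1 + (m' - m) <= exp m' / exp m).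
    { unfold Rdiv. rewrite <- exp_Ropp, <- exp_plus. apply exp_ineq1_le. }
    assert (exp m' <= exp m) by (apply exp_le_compat; lra).
    assert (/ (1 + exp m') - / (1 + exp m)
            = (exp m - exp m') / ((1 + exp m') * (1 + exp m))) by (field; lra).
    assert ((exp m - exp m') / ((1 + exp m') * (1 + exp m)) <= (exp m - exp m') / exp m).
    { unfold Rdiv. apply Rmult_le_compat_l; [lra|].
      apply Rinv_le_contravar; [lra | nra]. }
    assert ((exp m - exp m') / exp m = 1 - exp m' / exp m) by (field; lra).
    lra.
Qed.

(* [ngrad_dot n x w y = n * <- gradF n x w, y>] *)
Definition ngrad_dot (n : nat) (x : nat -> vec) (w y : vec) : R :=
  sumR (fun j => logistic_weight (dot w (x j)) * dot (x j) y) n.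

Definition weight_mass (n : nat) (x : nat -> vec) (w : vec) : R :=
  sumR (fun j => logistic_weight (dot w (x j))) n.

Lemma weight_mass_nonneg n x w : 0 <= weight_mass n x w.
Proof.
  unfold weight_mass. rewrite <- (Rmult_0_r (INR n)), <- sumR_const.
  apply sumR_le. intros i _. left. apply logistic_weight_pos.
Qed.

Lemma is_derive_sumR (f : nat -> R -> R) (df : nat -> R) k a :
  (forall i, is_derive (f i) a (df i)) ->
  is_derive (fun b => sumR (fun i => f i b) k) a (sumR df k).
Proof.
  intros H. induction k as [|k IH]; simpl.
  - exact (is_derive_const (K := R_AbsRing) 0 a).
  - apply (is_derive_plus (fun b => sumR (fun i => f i b) k) (f k)); auto.
Qed.

Lemma gradF_eq n x w :
  gradF n x w =
  (/ INR n * sumR (fun i => - (logistic_weight (dot w (x i)) * fst (x i))) n,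
   / INR n * sumR (fun i => - (logistic_weight (dot w (x i)) * snd (x i))) n).
Proof.
  destruct w as [w1 w2]. unfold gradF, F. simpl fst; simpl snd. f_equal.
  - apply is_derive_unique, is_derive_scal.
    apply (is_derive_sumR (fun i b => ln (1 + exp (- dot (b, w2) (x i))))).
    intros i. apply (is_derive_logistic_loss (fst (x i)) (w2 * snd (x i)) w1).
  - apply is_derive_unique, is_derive_scal.
    apply (is_derive_sumR (fun i b => ln (1 + exp (- dot (w1, b) (x i))))).
    intros i. unfold dot; simpl.
    replace (w1 * fst (x i) + w2 * snd (x i)) with (w2 * snd (x i) + w1 * fst (x i)) by ring.
    eapply is_derive_ext; [| apply (is_derive_logistic_loss (snd (x i)) (w1 * fst (x i)) w2)].
    intros b. simpl. do 4 f_equal. ring.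
Qed.

Lemma gd_step_dot n x eta k y :
  dot (gd n x eta (S k)) y =
  dot (gd n x eta k) y + eta / INR n * ngrad_dot n x (gd n x eta k) y.
Proof.
  simpl gd. set (w := gd n x eta k). rewrite gradF_eq. unfold ngrad_dot.
  rewrite (sumR_ext (fun j => logistic_weight (dot w (x j)) * dot (x j) y)
                    (fun j => fst y * (logistic_weight (dot w (x j)) * fst (x j))
                              + snd y * (logistic_weight (dot w (x j)) * snd (x j))))
    by (intros; unfold dot; ring).
  rewrite sumR_plus, !sumR_scal.
  rewrite (sumR_ext (fun i => - (logistic_weight (dot w (x i)) * fst (x i)))
                    (fun i => -1 * (logistic_weight (dot w (x i)) * fst (x i))))
    by (intros; ring).
  rewrite (sumR_ext (fun i => - (logistic_weight (dot w (x i)) * snd (x i)))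
                    (fun i => -1 * (logistic_weight (dot w (x i)) * snd (x i))))
    by (intros; ring).
  rewrite !sumR_scal. unfold vadd, vscale, dot. simpl. unfold Rdiv. ring.
Qed.

Lemma F_le_exp_neg_margin n x w m :
  (0 < n)%nat -> (forall i, (i < n)%nat -> m <= dot w (x i)) -> F n x w <= exp (- m).
Proof.
  intros Hn Hm. pose proof (lt_0_INR n Hn). unfold F.
  apply Rle_trans with (/ INR n * sumR (fun _ => exp (- m)) n).
  - apply Rmult_le_compat_l; [left; apply Rinv_0_lt_compat; lra|].
    apply sumR_le. intros i Hi.
    eapply Rle_trans; [apply ln_1p_exp_le | apply exp_le_compat].
    specialize (Hm i Hi). lra.
  - rewrite sumR_const. right. field. lra.
Qed.

Lemma max_margin_pos n x gamma wstar :
  (0 < n)%nat -> (exists w : vec, forall i, (i < n)%nat -> dot w (x i) > 0) ->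
  is_max_margin n x gamma wstar -> 0 < gamma.
Proof.
  intros Hn [w Hw] (_ & _ & _ & Hmax).
  assert (Hww : 0 < dot w w).
  { specialize (Hw O Hn). destruct w as [p q]. unfold dot in *; simpl in *.
    destruct (Req_dec p 0), (Req_dec q 0); subst; nra. }
  set (N := vnorm w).
  assert (HN : 0 < N) by (apply sqrt_lt_R0; exact Hww).
  assert (HNN : N * N = dot w w) by (apply sqrt_sqrt; lra).
  destruct (Hmax (vscale (/ N) w)) as [i [Hi Hle]].
  - unfold vnorm. rewrite <- sqrt_1. f_equal.
    replace (dot (vscale (/ N) w) (vscale (/ N) w)) with (dot w w / (N * N))
      by (unfold vscale, dot; simpl; field; lra).
    rewrite HNN. field. lra.
  - replace (dot (vscale (/ N) w) (x i)) with (dot w (x i) / N) in Hle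
      by (unfold vscale, dot; simpl; field; lra).
    specialize (Hw i Hi).
    assert (0 < dot w (x i) / N) by (apply Rdiv_lt_0_compat; lra). lra.
Qed.

(* [eta0] is chosen so that [c = gamma^2 eta / 4 >= 8 ln (256 / gamma^2)]. *)
Lemma exp_bounds_of_eta0 g eta :
  0 < g -> g <= 1 -> 32 / g ^ 2 * ln (256 / g ^ 2) <= eta ->
  8 * eta * exp (- (g ^ 2 * eta / 4)) <= 1 /\ 9 * exp (- (g ^ 2 * eta / 4)) <= g ^ 5.
Proof.
  intros Hg Hg1 Heta.
  set (u := 256 / g ^ 2). set (c := g ^ 2 * eta / 4).
  assert (Hg2 : 0 < g ^ 2) by (apply pow_lt; lra).
  assert (Hu : g ^ 2 * u = 256) by (unfold u; field; lra).
  assert (Hu1 : 1 <= u) by nra.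
  assert (HL : 0 <= ln u) by (rewrite <- ln_1; apply ln_le; lra).
  assert (Hc : 8 * ln u <= c).
  { unfold c. fold u in Heta.
    apply Rmult_le_compat_r with (r := g ^ 2 / 4) in Heta; [|lra].
    replace (32 / g ^ 2 * ln u * (g ^ 2 / 4)) with (8 * ln u) in Heta by (field; lra).
    lra. }
  assert (Hu4 : u ^ 4 <= exp (c / 2)).
  { rewrite <- (exp_ln (u ^ 4)) by (apply pow_lt; lra). apply exp_le_compat.
    rewrite ln_pow by lra. simpl INR. lra. }
  assert (Hhalf : c / 2 <= exp (c / 2)) by (pose proof (exp_ineq1_le (c / 2)); lra).
  assert (Hexp : exp c = exp (c / 2) * exp (c / 2)) by (rewrite <- exp_plus; f_equal; lra).
  assert (Huu : u <= u ^ 4) by (assert (1 <= u ^ 3) by (apply pow_R1_Rle; lra); nra).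
  assert (HE : 0 < exp c) by apply exp_pos.
  rewrite exp_Ropp. fold c.
  assert (H8 : 8 * eta <= exp c).
  { replace (8 * eta) with (c / 2 * (u / 4)) by (unfold c, u; field; lra).
    rewrite Hexp. apply Rmult_le_compat; nra. }
  assert (H9 : 9 <= g ^ 5 * exp c).
  { assert (Hg3 : g ^ 3 <= 1) by (rewrite <- (pow1 3); apply pow_incr; lra).
    assert (Hg5 : 0 < g ^ 5) by (apply pow_lt; lra).
    assert (Hu4' : 1 <= u ^ 4) by (apply pow_R1_Rle; lra).
    assert (Hexp4 : u ^ 4 <= exp c) by (rewrite Hexp; nra).
    assert (Hpow : g ^ 5 * g ^ 3 * u ^ 4 = 256 ^ 4).
    { rewrite <- Hu. ring. }
    assert (g ^ 5 * g ^ 3 * u ^ 4 <= g ^ 5 * u ^ 4) by nra.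
    assert (g ^ 5 * u ^ 4 <= g ^ 5 * exp c) by nra.
    lra. }
  split.
  - apply (Rmult_le_reg_r (exp c)); [lra|]. rewrite Rmult_assoc, Rinv_l by lra. lra.
  - apply (Rmult_le_reg_r (exp c)); [lra|]. rewrite Rmult_assoc, Rinv_l by lra. lra.
Qed.

Section SlowProgress.

Variables (n : nat) (x : nat -> vec) (eta gamma : R) (ws vs : vec).

Local Notation h := (eta / INR n).
Local Notation c := (gamma ^ 2 * eta / 4).
Local Notation e := (exp (- c)).

Hypothesis n_pos : (0 < n)%nat.
Hypothesis n_le_eta : INR n <= eta.
Hypothesis gamma_pos : 0 < gamma.
Hypothesis ws_unit : dot ws ws = 1.
Hypothesis vs_unit : dot vs vs = 1.
Hypothesis vs_ws_orth : dot vs ws = 0.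
Hypothesis x_in_ball : forall i, (i < n)%nat -> dot (x i) (x i) <= 1.
Hypothesis x_margin : forall i, (i < n)%nat -> gamma <= dot (x i) ws.
Hypothesis eta_exp_small : 8 * eta * e <= 1.
Hypothesis gamma_exp_small : 9 * e <= gamma ^ 5.

Lemma eta_pos : 0 < eta.
Proof. pose proof (lt_0_INR n n_pos). lra. Qed.

Lemma step_size_pos : 0 < h.
Proof.
  pose proof (lt_0_INR n n_pos). apply Rdiv_lt_0_compat; lra.
Qed.

Lemma step_size_mul_n : h * INR n = eta.
Proof. pose proof (lt_0_INR n n_pos). field. lra. Qed.

Lemma Rabs_dot_x_le_1 y i : dot y y <= 1 -> (i < n)%nat -> Rabs (dot (x i) y) <= 1.
Proof. intros Hy Hi. apply Rabs_dot_le_1; auto. Qed.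

Lemma dot_x_ws_le_1 i : (i < n)%nat -> dot (x i) ws <= 1.
Proof.
  intros Hi. pose proof (Rabs_dot_x_le_1 ws i (Req_le _ _ ws_unit) Hi) as Hdot.
  apply Rabs_le_between in Hdot. lra.
Qed.

Lemma gamma_le_1 : gamma <= 1.
Proof. pose proof (x_margin O n_pos). pose proof (dot_x_ws_le_1 O n_pos). lra. Qed.

Lemma margin_expand W i :
  dot W (x i) = dot W ws * dot (x i) ws + dot W vs * dot (x i) vs.
Proof. rewrite (dot_orthonormal_expand ws vs W (x i)); auto. Qed.

Lemma mass_le_ngrad_ws W : gamma * weight_mass n x W <= ngrad_dot n x W ws.
Proof.
  unfold weight_mass, ngrad_dot. rewrite <- sumR_scal. apply sumR_le.
  intros i Hi. pose proof (logistic_weight_pos (dot W (x i))).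
  pose proof (x_margin i Hi). nra.
Qed.

Lemma Rabs_ngrad_le_mass W y :
  dot y y <= 1 -> Rabs (ngrad_dot n x W y) <= weight_mass n x W.
Proof.
  intros Hy. apply Rabs_sumR_le. intros i Hi.
  pose proof (logistic_weight_pos (dot W (x i))).
  rewrite Rabs_mult, (Rabs_pos_eq (logistic_weight _)) by lra.
  pose proof (Rabs_dot_x_le_1 y i Hy Hi). pose proof (Rabs_pos (dot (x i) y)). nra.
Qed.

(* By [gd_step_dot], [slow (gd n x eta t)] is the negation of the conclusion at [t];
   it is invariant along the iteration. *)
Definition slow (W : vec) : Prop :=
  h * ngrad_dot n x W ws < gamma ^ 2 / 2 * dot W ws.

Lemma slow_mass_lt W : slow W -> h * weight_mass n x W < gamma / 2 * dot W ws.
Proof.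
  unfold slow. intros Hslow. pose proof step_size_pos. pose proof (mass_le_ngrad_ws W).
  apply (Rmult_lt_reg_l gamma); [lra|]. nra.
Qed.

Lemma slow_dot_ws_pos W : slow W -> 0 < dot W ws.
Proof.
  intros Hslow. pose proof (slow_mass_lt W Hslow). pose proof step_size_pos.
  pose proof (weight_mass_nonneg n x W). nra.
Qed.

Lemma margins_ge_of_small_vs W :
  Rabs (dot W vs) <= gamma / 2 * dot W ws ->
  forall i, (i < n)%nat -> gamma / 2 * dot W ws <= dot W (x i).
Proof.
  intros Hb i Hi. rewrite margin_expand.
  assert (Hbv : Rabs (dot W vs * dot (x i) vs) <= gamma / 2 * dot W ws).
  { rewrite Rabs_mult. pose proof (Rabs_dot_x_le_1 vs i (Req_le _ _ vs_unit) Hi).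
    pose proof (Rabs_pos (dot W vs)). pose proof (Rabs_pos (dot (x i) vs)). nra. }
  apply Rabs_le_between in Hbv.
  pose proof (Rabs_pos (dot W vs)). pose proof (x_margin i Hi). nra.
Qed.

Lemma no_slow_oscillation W :
  gamma * eta / 2 <= dot W ws -> slow W -> / (8 * eta) < F n x W ->
  (dot W vs + h * ngrad_dot n x W vs) * dot W vs < 0 -> False.
Proof.
  intros Ha Hslow HF Hflip.
  pose proof step_size_pos as Hh.
  assert (Hd : Rabs (h * ngrad_dot n x W vs) < gamma / 2 * dot W ws).
  { rewrite Rabs_mult, (Rabs_pos_eq h) by lra.
    pose proof (Rabs_ngrad_le_mass W vs (Req_le _ _ vs_unit)).
    pose proof (slow_mass_lt W Hslow). nra. }
  pose proof (Rabs_lt_of_sign_change _ _ Hflip) as Hb.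
  assert (Hm : forall i, (i < n)%nat -> c <= dot W (x i)).
  { intros i Hi. pose proof (margins_ge_of_small_vs W ltac:(lra) i Hi). nra. }
  pose proof (F_le_exp_neg_margin n x W c n_pos Hm).
  pose proof eta_pos.
  assert (8 * eta * F n x W <= 1).
  { apply Rle_trans with (8 * eta * e); [apply Rmult_le_compat_l|]; lra. }
  assert (8 * eta * / (8 * eta) = 1) by (field; lra).
  nra.
Qed.

Lemma low_margin_points_aligned W i j :
  0 <= dot W ws -> (i < n)%nat -> (j < n)%nat ->
  dot W (x i) < gamma * dot W ws -> dot W (x j) < gamma * dot W ws ->
  0 <= dot (x i) (x j).
Proof.
  intros Ha Hi Hj Hmi Hmj. rewrite margin_expand in Hmi, Hmj.
  pose proof (x_margin i Hi). pose proof (x_margin j Hj).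
  assert (Hbi : dot W vs * dot (x i) vs < 0) by nra.
  assert (Hbj : dot W vs * dot (x j) vs < 0) by nra.
  assert (0 < dot (x i) vs * dot (x j) vs) by nra.
  rewrite (dot_orthonormal_expand ws vs (x i) (x j)) by assumption. nra.
Qed.

Lemma ngrad_low_margin_ge W i :
  gamma * eta / 2 <= dot W ws -> (i < n)%nat -> dot W (x i) < gamma * dot W ws ->
  - (eta * (e * e)) <= h * ngrad_dot n x W (x i).
Proof.
  intros Ha Hi Hmi.
  assert (Hsum : INR n * - (e * e) <= ngrad_dot n x W (x i)).
  { rewrite <- sumR_const. apply sumR_le. intros j Hj.
    pose proof (logistic_weight_pos (dot W (x j))).
    destruct (Rle_or_lt (gamma * dot W ws) (dot W (x j))) as [Hhigh | Hlow].
    - assert (logistic_weight (dot W (x j)) <= e * e).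
      { rewrite <- exp_plus. eapply Rle_trans; [apply logistic_weight_le_exp|].
        apply exp_le_compat. nra. }
      pose proof (Rabs_dot_le_1 (x j) (x i) (x_in_ball j Hj) (x_in_ball i Hi)) as Hd.
      apply Rabs_le_between in Hd. nra.
    - assert (0 <= dot W ws) by (pose proof eta_pos; nra).
      pose proof (low_margin_points_aligned W j i ltac:(assumption) Hj Hi Hlow Hmi). nra. }
  pose proof step_size_pos.
  apply Rle_trans with (h * (INR n * - (e * e))).
  - right. rewrite <- (Rmult_assoc h), step_size_mul_n. ring.
  - apply Rmult_le_compat_l; lra.
Qed.

Lemma eta_err_le W :
  gamma * eta / 2 <= dot W ws -> eta * (eta * (e * e) + e) <= gamma ^ 4 / 4 * dot W ws.
Proof.
  intros Ha. pose proof eta_pos. pose proof (exp_pos (- c)).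
  assert (0 < eta * e) by nra.
  assert (eta * e * (eta * e) <= eta * e / 8) by nra.
  assert (eta * e * 9 <= eta * gamma ^ 5) by nra.
  assert (0 < gamma ^ 4) by (apply pow_lt; lra).
  nra.
Qed.

Section OneStep.

Variables W W' : vec.
Hypothesis gd_step : forall y, dot W' y = dot W y + h * ngrad_dot n x W y.
Hypothesis W_ws_large : gamma * eta / 2 <= dot W ws.
Hypothesis W_slow : slow W.

Lemma weight_step_le i :
  (i < n)%nat ->
  logistic_weight (dot W' (x i))
  <= logistic_weight (dot W (x i)) + (eta * (e * e) + e).
Proof.
  intros Hi. rewrite gd_step.
  pose proof (exp_pos (- c)). pose proof (logistic_weight_pos (dot W (x i))).
  pose proof eta_pos.
  destruct (Rle_or_lt (gamma * dot W ws) (dot W (x i))) as [Hhigh | Hlow].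
  - assert (Hd : Rabs (h * ngrad_dot n x W (x i)) < gamma / 2 * dot W ws).
    { pose proof step_size_pos. rewrite Rabs_mult, (Rabs_pos_eq h) by lra.
      pose proof (Rabs_ngrad_le_mass W (x i) (x_in_ball i Hi)).
      pose proof (slow_mass_lt W W_slow). nra. }
    apply Rabs_def2 in Hd.
    eapply Rle_trans; [apply logistic_weight_le_exp|].
    assert (exp (- (dot W (x i) + h * ngrad_dot n x W (x i))) <= e)
      by (apply exp_le_compat; nra).
    nra.
  - pose proof (ngrad_low_margin_ge W i W_ws_large Hi Hlow).
    pose proof (logistic_weight_le_shift (dot W (x i)) (dot W (x i) + h * ngrad_dot n x W (x i))
                  (eta * (e * e)) ltac:(nra) ltac:(lra)).
    lra.
Qed.

Lemma ngrad_ws_step_le :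
  ngrad_dot n x W' ws
  <= ngrad_dot n x W ws + INR n * (eta * (e * e) + e).
Proof.
  unfold ngrad_dot. rewrite <- sumR_const, <- sumR_plus. apply sumR_le.
  intros i Hi. pose proof (weight_step_le i Hi).
  pose proof (x_margin i Hi). pose proof (dot_x_ws_le_1 i Hi).
  assert (0 <= eta * (e * e) + e)
    by (pose proof eta_pos; pose proof (exp_pos (- c)); nra).
  apply Rle_trans with
    ((logistic_weight (dot W (x i)) + (eta * (e * e) + e)) * dot (x i) ws).
  - apply Rmult_le_compat_r; lra.
  - nra.
Qed.

Lemma slow_step : slow W'.
Proof.
  unfold slow. rewrite gd_step.
  pose proof step_size_pos. pose proof ngrad_ws_step_le. pose proof W_slow as Hs. unfold slow in Hs.
  pose proof (exp_pos (- c)).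
  pose proof eta_pos.
  pose proof (eta_err_le W W_ws_large).
  assert (h * ngrad_dot n x W' ws
          <= h * ngrad_dot n x W ws + eta * (eta * (e * e) + e)).
  { apply Rle_trans with
      (h * (ngrad_dot n x W ws + INR n * (eta * (e * e) + e))).
    - apply Rmult_le_compat_l; lra.
    - right. rewrite Rmult_plus_distr_l, <- (Rmult_assoc h), step_size_mul_n. reflexivity. }
  pose proof gamma_le_1.
  assert (0 < 1 - gamma ^ 2 / 2) by nra.
  nra.
Qed.

End OneStep.

Lemma gd_ws_nondecr s : dot (gd n x eta s) ws <= dot (gd n x eta (S s)) ws.
Proof.
  rewrite gd_step_dot. pose proof step_size_pos.
  pose proof (mass_le_ngrad_ws (gd n x eta s)). pose proof (weight_mass_nonneg n x (gd n x eta s)).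
  assert (0 <= ngrad_dot n x (gd n x eta s) ws) by nra.
  assert (0 <= h * ngrad_dot n x (gd n x eta s) ws) by (apply Rmult_le_pos; lra).
  lra.
Qed.

Lemma gd_ws_ge s : (1 <= s)%nat -> gamma * eta / 2 <= dot (gd n x eta s) ws.
Proof.
  induction s as [|[|s] IH]; intros Hs; [lia| |].
  - rewrite gd_step_dot.
    assert (Hmass : weight_mass n x (gd n x eta 0) = INR n * / 2).
    { rewrite <- sumR_const. apply sumR_ext. intros i _. unfold logistic_weight, dot.
      simpl. rewrite Rmult_0_l, Rmult_0_l, Rplus_0_r, exp_0. lra. }
    pose proof (mass_le_ngrad_ws (gd n x eta 0)) as Hngrad. rewrite Hmass in Hngrad.
    pose proof step_size_pos. pose proof step_size_mul_n.
    replace (dot (gd n x eta 0) ws) with 0 by (unfold dot; simpl; ring).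
    rewrite Rplus_0_l.
    apply Rle_trans with (h * (gamma * (INR n * / 2))); [right | apply Rmult_le_compat_l]; nra.
  - pose proof (IH ltac:(lia)). pose proof (gd_ws_nondecr (S s)). lra.
Qed.

Lemma slow_gd_index_pos s : slow (gd n x eta s) -> (1 <= s)%nat.
Proof.
  intros Hslow. apply slow_dot_ws_pos in Hslow. destruct s; [|lia].
  unfold dot in Hslow. simpl in Hslow. lra.
Qed.

Lemma slow_gd_persists t s : slow (gd n x eta t) -> (t <= s)%nat -> slow (gd n x eta s).
Proof.
  intros Hslow Hts. induction Hts as [|s _ IH]; [exact Hslow|].
  apply (slow_step (gd n x eta s)); [apply gd_step_dot | apply gd_ws_ge, slow_gd_index_pos | ]; exact IH.
Qed.

(* Only [F (w_tk) > 1 / (8 eta)] and the sign change of the [vs]-coordinate are needed. *)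
Lemma no_slow_before_oscillation t tk :
  (t < tk)%nat -> oscillation n x eta gamma ws vs tk -> ~ slow (gd n x eta t).
Proof.
  intros Htk (_ & HF & _ & Hflip) Hslow.
  pose proof (slow_gd_persists t tk Hslow ltac:(lia)) as Hslow_tk.
  apply (no_slow_oscillation (gd n x eta tk)); auto.
  - apply gd_ws_ge, slow_gd_index_pos, Hslow_tk.
  - rewrite <- gd_step_dot. exact Hflip.
Qed.

End SlowProgress.

Theorem lemma8 (n : nat) (x : nat -> vec) (gamma eta : R) (wstar vstar : vec)
  (Hn : (0 < n)%nat)
  (Hx : forall i, (i < n)%nat -> vnorm (x i) <= 1)
  (Hsep : exists w : vec, forall i, (i < n)%nat -> dot w (x i) > 0)
  (Hmm : is_max_margin n x gamma wstar)
  (Hv : vnorm vstar = 1 /\ dot vstar wstar = 0)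
  (Heta : eta > 0)
  (t : nat) :
  eta >= eta0 n gamma ->
  (exists tk : nat, (t < tk)%nat /\ oscillation n x eta gamma wstar vstar tk) ->
  dot (gd n x eta (S t)) wstar >= (1 + gamma ^ 2 / 2) * dot (gd n x eta t) wstar.
Proof.
  intros Heta0 [tk [Htk Hosc]].
  pose proof (max_margin_pos n x gamma wstar Hn Hsep Hmm) as Hgamma.
  destruct Hmm as (Hws & Hmargin & _ & _). destruct Hv as [Hvs Horth].
  apply dot_self_unit in Hws, Hvs.
  assert (Hball : forall i, (i < n)%nat -> dot (x i) (x i) <= 1)
    by (intros; apply dot_self_le_1; auto).
  assert (Hmargin' : forall i, (i < n)%nat -> gamma <= dot (x i) wstar)
    by (intros; rewrite dot_comm; auto).
  pose proof (gamma_le_1 n x gamma wstar Hn Hws Hball Hmargin') as Hgamma1.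
  unfold eta0 in Heta0.
  pose proof (Rmax_l (INR n) (32 / gamma ^ 2 * ln (256 / gamma ^ 2))).
  pose proof (Rmax_r (INR n) (32 / gamma ^ 2 * ln (256 / gamma ^ 2))).
  destruct (exp_bounds_of_eta0 gamma eta Hgamma Hgamma1 ltac:(lra)).
  apply Rnot_lt_ge. intros Hgrowth.
  eapply (no_slow_before_oscillation n x eta gamma wstar vstar); eauto; try lra.
  unfold slow. rewrite gd_step_dot in Hgrowth. lra.
Qed.
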